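(* Let $\alpha\colon\mathcal H'\to\mathcal H$ be a morphism of graded connected Hopf algebras over a field $\Bbbk$. Let $\varphi,\psi$ be characters of $\mathcal H$ and put $\varphi'=\varphi\circ\alpha$, $\psi'=\psi\circ\alpha$. Then: (a) $\alpha\bigl(S(\varphi',\psi')\bigr)\subseteq S(\varphi,\psi)$; (b) $I(\varphi',\psi')$ is the ideal of $(\mathcal H')^*$ generated by $\alpha^*\bigl(I(\varphi,\psi)\bigr)$. Moreover, if $\alpha$ is injective then $S(\varphi',\psi')=\alpha^{-1}\bigl(S(\varphi,\psi)\bigr)$ and $I(\varphi',\psi')=\alpha^*\bigl(I(\varphi,\psi)\bigr)$.
   Context: Graded connected Hopf algebras have finite-dimensional homogeneous components; $\mathcal H^*=\bigoplus_n(\mathcal H_n)^*$ is the graded dual and $\alpha^*\colon\mathcal H^*\to(\mathcal H')^*$ the dual map. Characters are algebra morphisms to $\Bbbk$; for a linear functional $\varphi$, $\varphi_n=\varphi|_{\mathcal H_n}$. $S(\varphi,\psi)$ is the largest graded subcoalgebra of $\mathcal H$ on which $\varphi=\psi$; $I(\varphi,\psi)$ is the ideal of $\mathcal H^*$ generated by $\varphi_n-\psi_n$, $n\ge0$ (similarly for $\mathcal H'$). *)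

(* Tensors in H ⊗ H are represented by finite lists of
   pairs (sum of elementary tensors); two such lists represent the same tensor
   iff all functionals f ⊗ g (f, g linear forms) agree on them, which is a
   correct criterion over a field. *)
From HB Require Import structures.
From mathcomp Require Import all_boot all_order all_algebra.
Set Implicit Arguments. Unset Strict Implicit. Unset Printing Implicit Defensive.
Import Order.TTheory GRing.Theory Num.Theory.
Local Open Scope ring_scope.

Section HopfDefs.
Variable k : fieldType.

Definition islinF (V : lmodType k) (f : V -> k) : Prop :=
  forall (a : k) (x y : V), f (a *: x + y) = a * f x + f y.
Definition islinM (V W : lmodType k) (f : V -> W) : Prop :=
  forall (a : k) (x y : V), f (a *: x + y) = a *: f x + f y.

Variable H : algType k.

Definition tev (f g : H -> k) (s : seq (H * H)) : k :=
  \sum_(p <- s) f p.1 * g p.2.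
Definition teq (s t : seq (H * H)) : Prop :=
  forall f g : H -> k, islinF f -> islinF g -> tev f g s = tev f g t.

Record HopfData := {
  hproj : nat -> H -> H;
  hcop : H -> seq (H * H);
  heps : H -> k;
  hanti : H -> H }.

Definition is_gcHopf (D : HopfData) : Prop :=
  let pr := hproj D in let cop := hcop D in
  let eps := heps D in let S := hanti D in
  (* grading: H = ⊕_n H_n with H_n = image of pr n *)
  (forall n, islinM (pr n)) /\
  (forall n m x, pr n (pr m x) = if n == m then pr m x else 0) /\
  (forall x, exists N, x = \sum_(n < N) pr n x) /\
  (forall n, exists s : seq H, forall x, exists c : nat -> k,
       pr n x = \sum_(i < size s) c i *: s`_i) /\
  pr 0%N 1 = 1 /\
  (forall n m x y, pr (n + m)%N (pr n x * pr m y) = pr n x * pr m y) /\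
  (forall x, exists c : k, pr 0%N x = c *: 1) /\ (1 : H) != 0 /\
  (forall a x y, teq (cop (a *: x + y))
                     ([seq (a *: p.1, p.2) | p <- cop x] ++ cop y)) /\
  (forall x (f g h : H -> k), islinF f -> islinF g -> islinF h ->
     \sum_(p <- cop x) tev f g (cop p.1) * h p.2 =
     \sum_(p <- cop x) f p.1 * tev g h (cop p.2)) /\
  (forall x y, teq (cop (x * y))
                   [seq (p.1 * q.1, p.2 * q.2) | p <- cop x, q <- cop y]) /\
  teq (cop 1) [:: (1, 1)] /\
  (forall n x, teq (cop (pr n x))
       [seq (pr i p.1, pr (n - i)%N p.2) | i <- iota 0 n.+1, p <- cop (pr n x)]) /\
  islinF eps /\ eps 1 = 1 /\ (forall x y, eps (x * y) = eps x * eps y) /\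
  (forall x, \sum_(p <- cop x) eps p.1 *: p.2 = x) /\
  (forall x, \sum_(p <- cop x) eps p.2 *: p.1 = x) /\
  (forall n x, (0 < n)%N -> eps (pr n x) = 0) /\
  islinM S /\
  (forall x, \sum_(p <- cop x) S p.1 * p.2 = eps x *: 1) /\
  (forall x, \sum_(p <- cop x) p.1 * S p.2 = eps x *: 1).

Definition is_character (phi : H -> k) : Prop :=
  islinF phi /\ phi 1 = 1 /\ (forall x y, phi (x * y) = phi x * phi y).

Variable D : HopfData.

(* graded dual H^* = ⊕_n (H_n)^* , as linear forms on H vanishing on all
   but finitely many H_n *)
Definition gdual (f : H -> k) : Prop :=
  islinF f /\ exists N, forall n x, (N <= n)%N -> f (hproj D n x) = 0.

Definition conv (f g : H -> k) : H -> k :=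
  fun x => \sum_(p <- hcop D x) f p.1 * g p.2.

Definition ideal_gen (G : (H -> k) -> Prop) (f : H -> k) : Prop :=
  exists (m : nat) (u g v : 'I_m -> H -> k),
    (forall i, gdual (u i) /\ G (g i) /\ gdual (v i)) /\
    forall x, f x = \sum_(i < m) conv (conv (u i) (g i)) (v i) x.

(* phi_n = phi restricted to H_n (extended by 0 to the other components) *)
Definition restr (phi : H -> k) (n : nat) : H -> k :=
  fun x => phi (hproj D n x).

Definition Iset (phi psi : H -> k) : (H -> k) -> Prop :=
  ideal_gen (fun g => exists n, forall x, g x = restr phi n x - restr psi n x).

Definition is_graded_subcoalg (C : H -> Prop) : Prop :=
  C 0 /\ (forall a x y, C x -> C y -> C (a *: x + y)) /\
  (forall n x, C x -> C (hproj D n x)) /\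
  (forall x, C x -> exists s : seq (H * H),
      (forall i, (i < size s)%N ->
         C (nth (0, 0) s i).1 /\ C (nth (0, 0) s i).2) /\ teq (hcop D x) s).

(* S(phi, psi): the largest graded subcoalgebra on which phi = psi, i.e. the
   union of all graded subcoalgebras on which phi = psi *)
Definition Sset (phi psi : H -> k) : H -> Prop :=
  fun x => exists C : H -> Prop, is_graded_subcoalg C /\
     (forall y, C y -> phi y = psi y) /\ C x.

End HopfDefs.

Definition is_hopf_morph (k : fieldType) (H' H : algType k)
    (D' : HopfData H') (D : HopfData H) (alpha : H' -> H) : Prop :=
  islinM alpha /\ alpha 1 = 1 /\ (forall x y, alpha (x * y) = alpha x * alpha y) /\
  (forall n x, alpha (hproj D' n x) = hproj D n (alpha x)) /\
  (forall x, teq (hcop D (alpha x)) [seq (alpha p.1, alpha p.2) | p <- hcop D' x]) /\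
  (forall x, heps D (alpha x) = heps D' x) /\
  (forall x, hanti D (alpha x) = alpha (hanti D' x)).

(* The image under [alpha] of a graded subcoalgebra is a graded subcoalgebra, which
   gives (a).  Precomposition with [alpha] is multiplicative for convolution and sends
   each generator [phi_n - psi_n] of [I(phi, psi)] to the generator [phi'_n - psi'_n]
   of [I(phi', psi')]; so [alpha^*] maps [I(phi, psi)] into [I(phi', psi')], all of
   whose generators lie in [alpha^*(I(phi, psi))], and (b) follows.
   If [alpha] is injective, every element of the graded dual of [H'] extends along
   [alpha] (it involves finitely many degrees, where [alpha] is an injection of
   finite-dimensional spaces), so [alpha^*] maps [I(phi, psi)] onto [I(phi', psi')].
   Finally the preimage of a graded subcoalgebra [C] is one: write the coproduct with
   linearly independent left (right) factors, which [alpha] keeps independent; pairing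
   with dual functionals forces the other factors into [C]. *)

From mathcomp Require Import all_boot all_order all_algebra zify.
From Stdlib Require Import ClassicalEpsilon FunctionalExtensionality.
Set Implicit Arguments. Unset Strict Implicit. Unset Printing Implicit Defensive.
Import GRing.Theory.
Local Open Scope ring_scope.

Section LinearMaps.
Variable k : fieldType.
Implicit Types V W : lmodType k.

Lemma islinM0 V W (f : V -> W) : islinM f -> f 0 = 0.
Proof.
move=> hf; have := hf 1 0 0; rewrite !scale1r addr0 => /(congr1 (fun z => z - f 0)).
by rewrite subrr addrK => <-.
Qed.

Lemma islinMD V W (f : V -> W) : islinM f -> forall x y, f (x + y) = f x + f y.
Proof. by move=> hf x y; have := hf 1 x y; rewrite !scale1r. Qed.

Lemma islinMZ V W (f : V -> W) : islinM f -> forall a x, f (a *: x) = a *: f x.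
Proof. by move=> hf a x; rewrite -[a *: x]addr0 hf (islinM0 hf) addr0. Qed.

Lemma islinMB V W (f : V -> W) : islinM f -> forall x y, f (x - y) = f x - f y.
Proof. by move=> hf x y; rewrite islinMD // -scaleN1r islinMZ // scaleN1r. Qed.

Lemma islinM_sum V W (f : V -> W) (I : Type) (r : seq I) (P : pred I) (F : I -> V) :
  islinM f -> f (\sum_(i <- r | P i) F i) = \sum_(i <- r | P i) f (F i).
Proof. by move=> hf; apply: (big_morph f (islinMD hf) (islinM0 hf)). Qed.

Lemma islinF0 V (f : V -> k) : islinF f -> f 0 = 0.
Proof.
move=> hf; have := hf 1 0 0; rewrite scale1r addr0 mul1r => /(congr1 (fun z => z - f 0)).
by rewrite subrr addrK => <-.
Qed.

Lemma islinFD V (f : V -> k) : islinF f -> forall x y, f (x + y) = f x + f y.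
Proof. by move=> hf x y; have := hf 1 x y; rewrite scale1r mul1r. Qed.

Lemma islinFZ V (f : V -> k) : islinF f -> forall a x, f (a *: x) = a * f x.
Proof. by move=> hf a x; rewrite -[a *: x]addr0 hf (islinF0 hf) addr0. Qed.

Lemma islinFB V (f : V -> k) : islinF f -> forall x y, f (x - y) = f x - f y.
Proof. by move=> hf x y; rewrite islinFD // -scaleN1r islinFZ // mulN1r. Qed.

Lemma islinF_sum V (f : V -> k) (I : Type) (r : seq I) (P : pred I) (F : I -> V) :
  islinF f -> f (\sum_(i <- r | P i) F i) = \sum_(i <- r | P i) f (F i).
Proof. by move=> hf; apply: (big_morph f (islinFD hf) (islinF0 hf)). Qed.

Lemma islinF_comp V W (f : W -> k) (g : V -> W) :
  islinF f -> islinM g -> islinF (fun x => f (g x)).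
Proof. by move=> hf hg a x y; rewrite hg hf. Qed.

End LinearMaps.

Lemma sum_delta (R : nmodType) N n (v : R) :
  \sum_(m < N) (if (m : nat) == n then v else 0) = if (n < N)%N then v else 0.
Proof.
case: ltnP => hn.
  rewrite (bigD1 (Ordinal hn)) //= eqxx big1 ?addr0 // => i hi.
  by rewrite ifF //; apply/negbTE.
rewrite big1 // => i _; rewrite ifF //; apply/negbTE.
by rewrite neq_ltn (leq_trans (ltn_ord i) hn).
Qed.

Section FiniteSpans.
Variables (k : fieldType) (V : lmodType k).
Implicit Types (l b e w : seq V) (c d : nat -> k).

Definition subspace (C : V -> Prop) :=
  C 0 /\ forall a x y, C x -> C y -> C (a *: x + y).

Lemma subspace_sum (C : V -> Prop) (I : eqType) (r : seq I) (F : I -> V) :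
  subspace C -> {in r, forall i, C (F i)} -> C (\sum_(i <- r) F i).
Proof.
move=> [C0 Clin] hF; rewrite big_seq; apply: big_ind => // x y Cx Cy.
by rewrite -[x]scale1r; apply: Clin.
Qed.

Lemma subspaceZ (C : V -> Prop) a x : subspace C -> C x -> C (a *: x).
Proof. by move=> [C0 Clin] Cx; rewrite -[_ *: _]addr0; apply: Clin. Qed.

Definition lcomb c l : V := \sum_(i < size l) c i *: l`_i.
Definition lfree l := forall c, lcomb c l = 0 -> forall i, (i < size l)%N -> c i = 0.
Definition lspan l y := exists c, y = lcomb c l.

Lemma lcomb_lin a c d l : lcomb (fun i => a * c i + d i) l = a *: lcomb c l + lcomb d l.
Proof.
rewrite /lcomb scaler_sumr -big_split /=; apply: eq_bigr => i _.
by rewrite scalerDl scalerA.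
Qed.

Lemma lcombB c d l : lcomb (fun i => c i - d i) l = lcomb c l - lcomb d l.
Proof. by rewrite /lcomb -sumrB; apply: eq_bigr => i _; rewrite scalerBl. Qed.

Lemma lcomb0 l : lcomb (fun _ => 0) l = 0.
Proof. by rewrite /lcomb big1 // => i _; rewrite scale0r. Qed.

Lemma lcomb_rcons c l x : lcomb c (rcons l x) = lcomb c l + c (size l) *: x.
Proof.
rewrite /lcomb size_rcons big_ord_recr /= nth_rcons ltnn eqxx; congr (_ + _).
by apply: eq_bigr => i _; rewrite nth_rcons ltn_ord.
Qed.

Lemma lcomb_delta l j : (j < size l)%N -> lcomb (fun i => (i == j)%:R) l = l`_j.
Proof.
move=> hj; rewrite /lcomb.
rewrite (eq_bigr (fun i : 'I_(size l) => if (i : nat) == j then l`_j else 0)).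
  by rewrite sum_delta hj.
by move=> i _; case: eqP => [->|_]; rewrite ?scale1r ?scale0r.
Qed.

Lemma lspan0 l : lspan l 0.
Proof. by exists (fun _ => 0); rewrite lcomb0. Qed.

Lemma lspanD l y z : lspan l y -> lspan l z -> lspan l (y + z).
Proof.
by move=> [c ->] [d ->]; exists (fun i => 1 * c i + d i); rewrite lcomb_lin scale1r.
Qed.

Lemma lspanZ l a y : lspan l y -> lspan l (a *: y).
Proof.
by move=> [c ->]; exists (fun i => a * c i + 0); rewrite lcomb_lin lcomb0 addr0.
Qed.

Lemma lspan_mem l y : y \in l -> lspan l y.
Proof.
move=> yl; rewrite -(nth_index 0 yl); exists (fun i => (i == index y l)%:R).
by rewrite lcomb_delta // index_mem.
Qed.

Lemma lspan_sum (I : Type) (r : seq I) (F : I -> V) l :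
  (forall i, lspan l (F i)) -> lspan l (\sum_(i <- r) F i).
Proof. by move=> hF; apply: big_ind => //; [apply: lspan0 | apply: lspanD]. Qed.

Lemma lspan_trans w l y : (forall x, x \in w -> lspan l x) -> lspan w y -> lspan l y.
Proof.
move=> hw [c ->]; apply: lspan_sum => i; apply: lspanZ; apply: hw; exact: mem_nth.
Qed.

Lemma lspan_catl l l' y : lspan l y -> lspan (l ++ l') y.
Proof. by apply: lspan_trans => x xl; apply: lspan_mem; rewrite mem_cat xl. Qed.

Lemma lspan_catr l l' y : lspan l' y -> lspan (l ++ l') y.
Proof. by apply: lspan_trans => x xl; apply: lspan_mem; rewrite mem_cat xl orbT. Qed.

Lemma lfree_nil : lfree [::].
Proof. by move=> c _ i. Qed.

Lemma lfree_rcons l x : lfree l -> ~ lspan l x -> lfree (rcons l x).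
Proof.
move=> fl xNl c; rewrite lcomb_rcons => hc.
have [cx0|cxN0] := eqVneq (c (size l)) 0.
  move: hc; rewrite cx0 scale0r addr0 => hc i; rewrite size_rcons ltnS leq_eqVlt.
  by case/predU1P => [-> //|]; apply: fl.
exfalso; apply: xNl; exists (fun i => - (c (size l))^-1 * c i + 0).
rewrite lcomb_lin lcomb0 addr0; move/eqP: hc; rewrite addr_eq0 => /eqP ->.
by rewrite scaleNr scalerN opprK scalerA mulVf // scale1r.
Qed.

Lemma lfree_extend w b : lfree b ->
  exists e, [/\ lfree (b ++ e), {subset e <= w} & forall y, y \in w -> lspan (b ++ e) y].
Proof.
elim: w b => [|x w IH] b fb; first by exists [::]; rewrite cats0.
have [xb|xNb] := classic (lspan b x).
  have [e [fe ew hw]] := IH b fb; exists e; split=> // [y /ew yw|y].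
    by rewrite in_cons yw orbT.
  by rewrite in_cons => /predU1P [->|/hw //]; apply: lspan_catl.
have [e [fe ew hw]] := IH _ (lfree_rcons fb xNb).
exists (x :: e); rewrite -cat_rcons; split=> // [y|y].
  by rewrite in_cons => /predU1P [->|/ew yw]; rewrite in_cons ?eqxx ?yw ?orbT.
rewrite in_cons => /predU1P [->|/hw //].
by apply: lspan_catl; apply: lspan_mem; rewrite mem_rcons mem_head.
Qed.

(* Chosen by [epsilon]: meaningful only when [l] is free and [y] lies in its span. *)
Definition lcoord l i y : k :=
  epsilon (inhabits (fun _ : nat => 0 : k)) (fun c => y = lcomb c l) i.

Lemma lcoordK l y : lspan l y -> y = lcomb (fun i => lcoord l i y) l.
Proof. by move=> hy; apply: (epsilon_spec _ (fun c => y = lcomb c l) hy). Qed.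

Lemma lcoord_eq l y c : lfree l -> y = lcomb c l -> forall i, (i < size l)%N -> lcoord l i y = c i.
Proof.
move=> fl hy i hi; apply/eqP; rewrite -subr_eq0; apply/eqP.
apply: (fl (fun i => lcoord l i y - c i)) => //.
by rewrite lcombB -lcoordK ?hy ?subrr //; exists c.
Qed.

Lemma lcoord_lin l a y z i : lfree l -> lspan l y -> lspan l z -> (i < size l)%N ->
  lcoord l i (a *: y + z) = a * lcoord l i y + lcoord l i z.
Proof.
move=> fl hy hz; apply: (lcoord_eq (c := fun i => a * lcoord l i y + lcoord l i z)) => //.
by rewrite lcomb_lin -!lcoordK.
Qed.

Lemma lcoord0 l i : lfree l -> (i < size l)%N -> lcoord l i 0 = 0.
Proof. by move=> fl; apply: (lcoord_eq (c := fun _ => 0)); rewrite ?lcomb0. Qed.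

(* Factoring through [P] is what later keeps the extension inside the graded dual. *)
Lemma linF_extend (P : V -> V) w b (t : nat -> k) :
  islinM P -> (forall x, lspan w (P x)) -> lfree b ->
  (forall j, (j < size b)%N -> P b`_j = b`_j) ->
  exists g : V -> k, [/\ islinF g, forall j, (j < size b)%N -> g b`_j = t j &
     forall x, P x = 0 -> g x = 0].
Proof.
move=> linP imP fb Pb; have [e [fbe _ hw]] := lfree_extend w fb.
have spanP x : lspan (b ++ e) (P x) by apply: lspan_trans hw (imP x).
have lt_be (i : 'I_(size b)) : (i < size (b ++ e))%N.
  by rewrite size_cat (leq_trans (ltn_ord i)) ?leq_addr.
exists (fun x => \sum_(i < size b) t i * lcoord (b ++ e) i (P x)); split.
- move=> a x y; rewrite mulr_sumr -big_split /=; apply: eq_bigr => i _.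
  by rewrite linP lcoord_lin // mulrDr mulrCA.
- move=> j hj; rewrite Pb //.
  rewrite (eq_bigr (fun i : 'I_(size b) => if (i : nat) == j then t j else 0)) ?sum_delta ?hj //.
  move=> i _; rewrite (lcoord_eq (c := fun i => (i == j)%:R)) //.
    by case: eqP => [->|_]; rewrite ?mulr1 ?mulr0.
  by rewrite lcomb_delta ?nth_cat ?hj // size_cat (leq_trans hj) ?leq_addr.
- by move=> x ->; rewrite big1 // => i _; rewrite lcoord0 ?mulr0.
Qed.

End FiniteSpans.

Section Tensors.
Variables (k : fieldType) (A : algType k).
Implicit Types (r s t : seq (A * A)) (f g : A -> k).

Lemma teq_sym s t : teq s t -> teq t s.
Proof. by move=> eqst f g lf lg; rewrite eqst. Qed.

Lemma teq_trans r s t : teq r s -> teq s t -> teq r t.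
Proof. by move=> eqrs eqst f g lf lg; rewrite eqrs ?eqst. Qed.

Lemma tev_cat f g s t : tev f g (s ++ t) = tev f g s + tev f g t.
Proof. by rewrite /tev big_cat. Qed.

Lemma tev_scale f g a s : islinF f ->
  tev f g [seq (a *: p.1, p.2) | p <- s] = a * tev f g s.
Proof.
move=> lf; rewrite /tev big_map mulr_sumr; apply: eq_bigr => p _ /=.
by rewrite (islinFZ lf) mulrA.
Qed.

Lemma tev_swap f g s : tev f g [seq (p.2, p.1) | p <- s] = tev g f s.
Proof. by rewrite /tev big_map; apply: eq_bigr => p _ /=; rewrite mulrC. Qed.

Lemma nth_pairs_in (C : A -> Prop) s :
  (forall i, (i < size s)%N -> C (nth (0, 0) s i).1 /\ C (nth (0, 0) s i).2) <->
  {in s, forall p, C p.1 /\ C p.2}.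
Proof.
split=> [Cs p /(nthP (0, 0)) [i hi <-]|Cs i hi]; first exact: Cs.
by apply: Cs; apply: mem_nth.
Qed.

(* Expanding the first tensor factors in a basis [e] of their span. *)
Lemma teq_free_fst r : exists r',
  [/\ teq r' r, lfree (map fst r') & {subset map fst r' <= map fst r}].
Proof.
have [e [fe er spane]] := lfree_extend (map fst r) (@lfree_nil k A).
pose r' := [seq (e`_i, \sum_(p <- r) lcoord e i p.1 *: p.2) | i <- iota 0 (size e)].
have fst_r' : map fst r' = e by rewrite -map_comp (map_nth_iota0 0) ?take_size.
exists r'; rewrite fst_r'; split => // f g lf lg.
rewrite /tev big_map -val_enum_ord big_map big_enum /=.
under eq_bigr do rewrite (islinF_sum _ _ _ lg) mulr_sumr.
rewrite exchange_big /=; apply: eq_big_seq => p pr.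
rewrite {2}(lcoordK (spane _ (map_f fst pr))) /lcomb (islinF_sum _ _ _ lf) mulr_suml.
by apply: eq_bigr => i _; rewrite (islinFZ lf) (islinFZ lg) mulrCA mulrA.
Qed.

Lemma teq_free_snd r : exists r', teq r' r /\ lfree (map snd r').
Proof.
have [r' [eqr' fr' _]] := teq_free_fst [seq (p.2, p.1) | p <- r].
exists [seq (p.2, p.1) | p <- r']; split; last by rewrite -map_comp; exact fr'.
by move=> f g lf lg; rewrite tev_swap eqr' // tev_swap.
Qed.

End Tensors.

Section GradedConnected.
Variables (k : fieldType) (H : algType k) (D : HopfData H).
Hypothesis hD : is_gcHopf D.

Ltac gc_axiom := let h := fresh in let r := fresh in
  move: hD; rewrite /is_gcHopf /=;
  repeat (intros [h r]; first [exact: h | revert r; clear h]).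

Lemma hproj_lin n : islinM (hproj D n). Proof. gc_axiom. Qed.
Lemma hproj_hproj n m x : hproj D n (hproj D m x) = if n == m then hproj D m x else 0.
Proof. gc_axiom. Qed.
Lemma hproj_decomp x : exists N, x = \sum_(n < N) hproj D n x. Proof. gc_axiom. Qed.
Lemma hproj_span n : exists s, forall x, lspan s (hproj D n x). Proof. gc_axiom. Qed.
Lemma hcop_lin a x y :
  teq (hcop D (a *: x + y)) ([seq (a *: p.1, p.2) | p <- hcop D x] ++ hcop D y).
Proof. gc_axiom. Qed.
Lemma hcop_coassoc x (f g h : H -> k) : islinF f -> islinF g -> islinF h ->
  \sum_(p <- hcop D x) tev f g (hcop D p.1) * h p.2 =
  \sum_(p <- hcop D x) f p.1 * tev g h (hcop D p.2).
Proof. gc_axiom. Qed.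
Lemma hcop_graded n x : teq (hcop D (hproj D n x))
  [seq (hproj D i p.1, hproj D (n - i)%N p.2) | i <- iota 0 n.+1, p <- hcop D (hproj D n x)].
Proof. gc_axiom. Qed.
Lemma heps_lin : islinF (heps D). Proof. gc_axiom. Qed.
Lemma hcop_counitl x : \sum_(p <- hcop D x) heps D p.1 *: p.2 = x. Proof. gc_axiom. Qed.
Lemma hcop_counitr x : \sum_(p <- hcop D x) heps D p.2 *: p.1 = x. Proof. gc_axiom. Qed.
Lemma heps_hproj n x : (0 < n)%N -> heps D (hproj D n x) = 0. Proof. gc_axiom. Qed.

Lemma graded_subcoalg_subspace C : is_graded_subcoalg D C -> subspace C.
Proof. by case=> C0 [Clin _]. Qed.

Definition htrunc N x := \sum_(n < N) hproj D n x.

Lemma htrunc_lin N : islinM (htrunc N).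
Proof.
move=> a x y; rewrite /htrunc scaler_sumr -big_split /=.
by apply: eq_bigr => n _; apply: hproj_lin.
Qed.

Lemma htruncS N x : htrunc N.+1 x = htrunc N x + hproj D N x.
Proof. by rewrite /htrunc big_ord_recr. Qed.

Lemma hproj_htrunc m N x : hproj D m (htrunc N x) = if (m < N)%N then hproj D m x else 0.
Proof.
rewrite /htrunc (islinM_sum _ _ _ (hproj_lin m)).
rewrite (eq_bigr (fun n : 'I_N => if (n : nat) == m then hproj D m x else 0)) ?sum_delta //.
by move=> n _; rewrite hproj_hproj; case: eqVneq => [->|].
Qed.

Lemma htrunc_hproj N n x : htrunc N (hproj D n x) = if (n < N)%N then hproj D n x else 0.
Proof.
rewrite /htrunc (eq_bigr (fun m : 'I_N => if (m : nat) == n then hproj D n x else 0)) ?sum_delta //.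
by move=> m _; rewrite hproj_hproj.
Qed.

Lemma htrunc_idem N x : htrunc N (htrunc N x) = htrunc N x.
Proof.
rewrite {2 3}/htrunc (islinM_sum _ _ _ (htrunc_lin N)).
by apply: eq_bigr => n _; rewrite htrunc_hproj ltn_ord.
Qed.

Lemma htrunc_eventually x : exists N, forall M, (N <= M)%N -> htrunc M x = x.
Proof.
have [N dx] := hproj_decomp x; exists N => M hM.
rewrite dx (islinM_sum _ _ _ (htrunc_lin M)); apply: eq_bigr => n _.
by rewrite htrunc_hproj (leq_trans (ltn_ord n) hM).
Qed.

Lemma htrunc_fix_seq (b : seq H) : exists N, forall y, y \in b -> htrunc N y = y.
Proof.
suff [N hN] : exists N, forall M, (N <= M)%N -> forall y, y \in b -> htrunc M y = y.
  by exists N; apply: hN.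
elim: b => [|x b [N1 h1]]; first by exists 0%N.
have [N0 h0] := htrunc_eventually x.
exists (maxn N0 N1) => M; rewrite geq_max => /andP [hM0 hM1] y.
by rewrite in_cons => /predU1P [->|]; [apply: h0 | apply: h1].
Qed.

Lemma htrunc_span N : exists w, (forall x, lspan w (htrunc N x)) /\
  (forall y, y \in w -> htrunc N y = y).
Proof.
elim: N => [|N [w [spanw fixw]]].
  by exists [::]; split => // x; rewrite /htrunc big_ord0; apply: lspan0.
have [s spans] := hproj_span N.
exists (w ++ map (hproj D N) s); split => [x|y].
  rewrite htruncS; apply: lspanD; first exact: lspan_catl.
  apply: lspan_catr; rewrite -[hproj D N x](_ : hproj D N (hproj D N x) = _).
  2: by rewrite hproj_hproj eqxx.
  have [c ->] := spans x; rewrite /lcomb (islinM_sum _ _ _ (hproj_lin N)); apply: lspan_sum => i.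
  by rewrite (islinMZ (hproj_lin N)); apply: lspanZ; apply: lspan_mem; rewrite map_f ?mem_nth.
rewrite mem_cat => /orP [yw|/mapP [z _ ->]].
  by rewrite htruncS fixw // -{2}(fixw _ yw) hproj_htrunc ltnn addr0.
by rewrite htruncS htrunc_hproj ltnn add0r hproj_hproj eqxx.
Qed.

Lemma linF_htrunc (u : H -> k) N x : islinF u ->
  (forall n y, (N <= n)%N -> u (hproj D n y) = 0) -> u (htrunc N x) = u x.
Proof.
move=> lu uN; have [M0 hM0] := htrunc_eventually x.
rewrite -{2}(hM0 (maxn M0 N)) ?leq_maxl //.
elim: (maxn M0 N) (leq_maxr M0 N) => [|M IH]; first by rewrite leqn0 => /eqP ->.
rewrite leq_eqVlt => /predU1P [-> //|ltNM].
by rewrite htruncS (islinFD lu) uN // addr0 IH.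
Qed.

Lemma gdual_free_values (b : seq H) (t : nat -> k) : lfree b ->
  exists g, gdual D g /\ forall j, (j < size b)%N -> g b`_j = t j.
Proof.
move=> fb; have [N fixN] := htrunc_fix_seq b; have [w [spanw _]] := htrunc_span N.
have [g [lg gb gN]] :=
  linF_extend t (htrunc_lin N) spanw fb (fun j hj => fixN _ (mem_nth 0 hj)).
exists g; split => //; split => //; exists N => n x hn.
by apply: gN; rewrite htrunc_hproj ltnNge hn.
Qed.

Lemma linF_separation (x y : H) : (forall g, islinF g -> g x = g y) -> x = y.
Proof.
move=> sep; apply/eqP; rewrite -subr_eq0; apply/negPn/negP => nz.
have fz : lfree [:: x - y].
  move=> c; rewrite /lcomb big_ord1 => /eqP; rewrite scaler_eq0 (negbTE nz) orbF.
  by move=> /eqP c0 [].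
have [g [[lg _] g1]] := gdual_free_values (fun _ => 1) fz.
by have := g1 0%N isT; rewrite /= (islinFB lg) sep // subrr => /esym/eqP; rewrite oner_eq0.
Qed.

(* Pairing with the functional dual to the [i]-th first factor exhibits the [i]-th
   second factor as a combination of second factors of [s]. *)
Lemma tensor_snd_in (C : H -> Prop) (q s : seq (H * H)) : subspace C ->
  {in s, forall p, C p.1 /\ C p.2} -> teq q s -> lfree (map fst q) ->
  {in q, forall p, C p.2}.
Proof.
move=> sC Cs eqqs fq _ /(nthP (0, 0)) [i hi <-].
have [f [[lf _] fq_delta]] := gdual_free_values (fun j => (j == i)%:R) fq.
suff -> : (nth (0, 0) q i).2 = \sum_(p <- s) f p.1 *: p.2.
  by apply: subspace_sum => // p /Cs [_ Cp2]; apply: subspaceZ.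
apply: linF_separation => g lg; rewrite (islinF_sum _ _ _ lg).
under [RHS]eq_bigr do rewrite (islinFZ lg).
rewrite -[RHS](eqqs f g lf lg) /tev (big_nth (0, 0)) big_mkord.
rewrite (eq_bigr (fun j : 'I_(size q) => if (j : nat) == i then g (nth (0, 0) q i).2 else 0)).
  by rewrite sum_delta hi.
move=> j _; rewrite -(nth_map (0, 0) 0) // fq_delta ?size_map //.
by case: eqP => [->|_]; rewrite ?mul1r ?mul0r.
Qed.

Lemma tensor_fst_in (C : H -> Prop) (q s : seq (H * H)) : subspace C ->
  {in s, forall p, C p.1 /\ C p.2} -> teq q s -> lfree (map snd q) ->
  {in q, forall p, C p.1}.
Proof.
move=> sC Cs eqqs fq p pq; pose swap (p : H * H) := (p.2, p.1).
apply: (@tensor_snd_in C (map swap q) (map swap s) sC _ _ _ (swap p) (map_f swap pq)).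
- by move=> _ /mapP [p' p's ->]; have [] := Cs p' p's.
- by move=> f g lf lg; rewrite !tev_swap eqqs.
- by rewrite -map_comp; exact fq.
Qed.

End GradedConnected.

Definition Igen (k : fieldType) (H : algType k) (D : HopfData H) (phi psi g : H -> k) :=
  exists n, forall x, g x = restr D phi n x - restr D psi n x.

Section Convolution.
Variables (k : fieldType) (H : algType k) (D : HopfData H).
Hypothesis hD : is_gcHopf D.
Implicit Types (f g h u v : H -> k) (G : (H -> k) -> Prop).

Lemma convE f g x : conv D f g x = tev f g (hcop D x).
Proof. by []. Qed.

Lemma conv_lin f g : islinF f -> islinF g -> islinF (conv D f g).
Proof. by move=> lf lg a x y; rewrite !convE hcop_lin // tev_cat tev_scale. Qed.

Lemma conv_assoc f g h : islinF f -> islinF g -> islinF h ->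
  conv D (conv D f g) h = conv D f (conv D g h).
Proof. by move=> lf lg lh; apply: functional_extensionality => x; apply: hcop_coassoc. Qed.

Lemma conv_epsl h : islinF h -> conv D (heps D) h = h.
Proof.
move=> lh; apply: functional_extensionality => x.
rewrite -{2}(hcop_counitl hD x) (islinF_sum _ _ _ lh).
by apply: eq_bigr => p _; rewrite (islinFZ lh).
Qed.

Lemma conv_epsr h : islinF h -> conv D h (heps D) = h.
Proof.
move=> lh; apply: functional_extensionality => x.
rewrite -{2}(hcop_counitr hD x) (islinF_sum _ _ _ lh).
by apply: eq_bigr => p _; rewrite (islinFZ lh) mulrC.
Qed.

Lemma gdual_heps : gdual D (heps D).
Proof. by split; [apply: heps_lin | exists 1%N => n x; apply: heps_hproj]. Qed.

(* The coproduct is graded, so [conv D f g] vanishes in degrees [>= Nf + Ng]. *)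
Lemma conv_gdual f g : gdual D f -> gdual D g -> gdual D (conv D f g).
Proof.
move=> [lf [Nf fN]] [lg [Ng gN]]; split; first exact: conv_lin.
exists (Nf + Ng)%N => n x hn; rewrite convE hcop_graded // /tev.
rewrite big1_seq // => _ /andP [_ /allpairsP [[i p] [hi _ ->]]] /=.
have [hiNf|hiNf] := leqP Nf i; first by rewrite fN // mul0r.
by rewrite gN ?mulr0 //; lia.
Qed.

Lemma conv_sumr (I : Type) (r : seq I) f (F : I -> H -> k) :
  conv D f (fun x => \sum_(i <- r) F i x) = fun x => \sum_(i <- r) conv D f (F i) x.
Proof.
apply: functional_extensionality => x; rewrite /conv.
by under eq_bigr do rewrite mulr_sumr; rewrite exchange_big.
Qed.

Lemma conv_suml (I : Type) (r : seq I) g (F : I -> H -> k) :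
  conv D (fun x => \sum_(i <- r) F i x) g = fun x => \sum_(i <- r) conv D (F i) g x.
Proof.
apply: functional_extensionality => x; rewrite /conv.
by under eq_bigr do rewrite mulr_suml; rewrite exchange_big.
Qed.

Lemma ideal_gen_ext G f f' : ideal_gen D G f -> f =1 f' -> ideal_gen D G f'.
Proof.
by move=> [m [u [g [v [Guv ef]]]]] eqf; exists m, u, g, v; split => // x; rewrite -eqf ef.
Qed.

Lemma ideal_gen0 G : ideal_gen D G (fun _ => 0).
Proof.
exists 0%N, (fun _ => heps D), (fun _ _ => 0), (fun _ => heps D).
by split=> [[]|x]; rewrite ?big_ord0.
Qed.

Lemma ideal_genD G f1 f2 : ideal_gen D G f1 -> ideal_gen D G f2 ->
  ideal_gen D G (fun x => f1 x + f2 x).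
Proof.
move=> [m1 [u1 [g1 [v1 [G1 e1]]]]] [m2 [u2 [g2 [v2 [G2 e2]]]]].
pose glue T (a1 : 'I_m1 -> T) (a2 : 'I_m2 -> T) (i : 'I_(m1 + m2)) :=
  match split i with inl j => a1 j | inr j => a2 j end.
exists (m1 + m2)%N, (glue _ u1 u2), (glue _ g1 g2), (glue _ v1 v2); split.
  by move=> i; rewrite /glue; case: (split i).
by move=> x; rewrite e1 e2 big_split_ord /glue; congr (_ + _); apply: eq_bigr => i _;
  [rewrite (unsplitK (inl i)) | rewrite (unsplitK (inr i))].
Qed.

Lemma ideal_gen_sum G (I : Type) (r : seq I) (F : I -> H -> k) :
  (forall i, ideal_gen D G (F i)) -> ideal_gen D G (fun x => \sum_(i <- r) F i x).
Proof.
move=> IF; elim: r => [|i r IH].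
  by apply: ideal_gen_ext (ideal_gen0 G) _ => x; rewrite big_nil.
by apply: ideal_gen_ext (ideal_genD (IF i) IH) _ => x; rewrite big_cons.
Qed.

Lemma ideal_gen_conv G u v f : (forall g, G g -> islinF g) -> gdual D u -> gdual D v ->
  ideal_gen D G f -> ideal_gen D G (conv D (conv D u f) v).
Proof.
move=> linG gu gv [m [a [e [b [Gaeb ef]]]]].
exists m, (fun i => conv D u (a i)), e, (fun i => conv D (b i) v); split.
  by move=> i; have [ga [Ge gb]] := Gaeb i; split; [|split]; try apply: conv_gdual.
have -> : f = fun x => \sum_(i < m) conv D (conv D (a i) (e i)) (b i) x.
  exact: functional_extensionality.
move=> x; rewrite conv_sumr conv_suml; apply: eq_bigr => i _.
have [[la _] [/linG le [lb _]]] := Gaeb i; have [lu _] := gu; have [lv _] := gv.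
have lae := conv_lin la le.
by rewrite (conv_assoc lu (conv_lin lae lb) lv) (conv_assoc lae lb lv)
  (conv_assoc lu la le) (conv_assoc lu lae (conv_lin lb lv)).
Qed.

Lemma ideal_gen_base G g : G g -> islinF g -> ideal_gen D G g.
Proof.
move=> Gg lg; exists 1%N, (fun _ => heps D), (fun _ => g), (fun _ => heps D).
split=> [_|x]; first by split; [|split]; try apply: gdual_heps.
by rewrite big_ord1 conv_epsl // conv_epsr.
Qed.

Lemma ideal_gen_mono G1 G2 f : (forall g, G1 g -> G2 g) ->
  ideal_gen D G1 f -> ideal_gen D G2 f.
Proof.
move=> G12 [m [u [g [v [Guv ef]]]]]; exists m, u, g, v; split => // i.
by have [gu [/G12 G2g gv]] := Guv i.
Qed.

Lemma ideal_gen_sub G1 G2 f : (forall g, G2 g -> islinF g) ->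
  (forall g, G1 g -> ideal_gen D G2 g) -> ideal_gen D G1 f -> ideal_gen D G2 f.
Proof.
move=> linG2 G12 [m [u [g [v [Guv ef]]]]].
apply: ideal_gen_ext (fun x => esym (ef x)); apply: ideal_gen_sum => i.
by have [gu [/G12 G2g gv]] := Guv i; apply: ideal_gen_conv.
Qed.

Lemma Igen_lin phi psi g : islinF phi -> islinF psi -> Igen D phi psi g -> islinF g.
Proof.
move=> lphi lpsi [n gn] a x y; rewrite !gn /restr hproj_lin // lphi lpsi.
by rewrite mulrBr opprD addrACA.
Qed.

End Convolution.

Section HopfMorphism.
Variables (k : fieldType) (H' H : algType k) (D' : HopfData H') (D : HopfData H).
Variable alpha : H' -> H.
Hypothesis ha : is_hopf_morph D' D alpha.

Local Notation alpha2 := (fun p : H' * H' => (alpha p.1, alpha p.2)).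

Lemma alpha_lin : islinM alpha. Proof. by case: ha. Qed.
Lemma alpha_hproj n x : alpha (hproj D' n x) = hproj D n (alpha x).
Proof. by case: ha => _ [_ [_ []]]. Qed.
Lemma alpha_hcop x : teq (hcop D (alpha x)) (map alpha2 (hcop D' x)).
Proof. by case: ha => _ [_ [_ [_ []]]]. Qed.

Lemma alpha_htrunc N x : alpha (htrunc D' N x) = htrunc D N (alpha x).
Proof.
by rewrite /htrunc (islinM_sum _ _ _ alpha_lin); apply: eq_bigr => n _; apply: alpha_hproj.
Qed.

Lemma tev_comp (f g : H -> k) s :
  tev f g (map alpha2 s) = tev (fun x => f (alpha x)) (fun x => g (alpha x)) s.
Proof. by rewrite /tev big_map. Qed.

Lemma teq_comp s t : teq s t -> teq (map alpha2 s) (map alpha2 t).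
Proof. by move=> eqst f g lf lg; rewrite !tev_comp eqst //; apply: islinF_comp alpha_lin. Qed.

Lemma conv_comp (f g : H -> k) x : islinF f -> islinF g ->
  conv D f g (alpha x) = conv D' (fun y => f (alpha y)) (fun y => g (alpha y)) x.
Proof. by move=> lf lg; rewrite convE alpha_hcop // tev_comp. Qed.

Lemma gdual_comp (f : H -> k) : gdual D f -> gdual D' (fun x => f (alpha x)).
Proof.
move=> [lf [N fN]]; split; first exact: islinF_comp alpha_lin.
by exists N => n x hn; rewrite alpha_hproj fN.
Qed.

Lemma lfree_comp (l : seq H') : injective alpha -> lfree l -> lfree (map alpha l).
Proof.
move=> inj fl c; rewrite size_map => hc; apply: fl; apply: inj.
rewrite (islinM0 alpha_lin) -{}hc /lcomb size_map (islinM_sum _ _ _ alpha_lin).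
by apply: eq_bigr => i _; rewrite (islinMZ alpha_lin) (nth_map 0).
Qed.

Lemma graded_subcoalg_image C' : is_graded_subcoalg D' C' ->
  is_graded_subcoalg D (fun y => exists2 x, C' x & y = alpha x).
Proof.
move=> [C0 [Clin [Cproj Ccop]]].
split; first by exists 0; rewrite ?(islinM0 alpha_lin).
split.
  move=> a _ _ [x Cx ->] [y Cy ->].
  by exists (a *: x + y); [apply: Clin | rewrite alpha_lin].
split; first by move=> n _ [x Cx ->]; exists (hproj D' n x); [apply: Cproj | rewrite alpha_hproj].
move=> _ [x Cx ->]; have [s [/nth_pairs_in Cs eqs]] := Ccop x Cx.
exists (map alpha2 s); split; last exact: teq_trans (alpha_hcop x) (teq_comp eqs).
apply/(nth_pairs_in (fun y => exists2 x, C' x & y = alpha x)) => _ /mapP [p ps ->].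
have [Cp1 Cp2] := Cs p ps.
by split; [exists p.1 | exists p.2].
Qed.

(* Rewrite the coproduct with free second factors, then with free first factors;
   [alpha] keeps them free, so [tensor_fst_in] and [tensor_snd_in] apply in turn. *)
Lemma graded_subcoalg_preimage C : is_gcHopf D -> injective alpha ->
  is_graded_subcoalg D C -> is_graded_subcoalg D' (fun x => C (alpha x)).
Proof.
move=> hD inj gC; have sC := graded_subcoalg_subspace gC.
case: gC => [C0 [Clin [Cproj Ccop]]].
split; first by rewrite (islinM0 alpha_lin).
split; first by move=> a x y Cx Cy; rewrite alpha_lin; apply: Clin.
split; first by move=> n x Cx; rewrite alpha_hproj; apply: Cproj.
move=> y Cy; have [s [/nth_pairs_in Cs eqs]] := Ccop _ Cy.
have [r1 [eqr1 fr1]] := teq_free_snd (hcop D' y).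
have eq1 : teq (map alpha2 r1) s.
  exact: teq_trans (teq_comp eqr1) (teq_trans (teq_sym (alpha_hcop y)) eqs).
have C1 : {in r1, forall p, C (alpha p.1)}.
  move=> p pr1; apply: (tensor_fst_in hD sC Cs eq1 _ (map_f alpha2 pr1)).
  by rewrite -map_comp (map_comp alpha snd); apply: lfree_comp.
have [r2 [eqr2 fr2 r2r1]] := teq_free_fst r1.
have eq2 : teq (map alpha2 r2) s := teq_trans (teq_comp eqr2) eq1.
have C2 : {in r2, forall p, C (alpha p.2)}.
  move=> p pr2; apply: (tensor_snd_in hD sC Cs eq2 _ (map_f alpha2 pr2)).
  by rewrite -map_comp (map_comp alpha fst); apply: lfree_comp.
exists r2; split; last exact: teq_sym (teq_trans eqr2 eqr1).
apply/(nth_pairs_in (fun x => C (alpha x))) => p pr2; split; last exact: C2.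
have /r2r1 /mapP [q qr1 ->] := map_f fst pr2; exact: C1.
Qed.

Lemma Sset_comp phi psi x :
  Sset D' (fun y => phi (alpha y)) (fun y => psi (alpha y)) x -> Sset D phi psi (alpha x).
Proof.
move=> [C' [gC' [eqC' C'x]]]; exists (fun y => exists2 x, C' x & y = alpha x).
by split; [apply: graded_subcoalg_image | split=> [_ [y /eqC' ? ->] //|]; exists x].
Qed.

Lemma Sset_comp_inj phi psi x : is_gcHopf D -> injective alpha ->
  Sset D phi psi (alpha x) -> Sset D' (fun y => phi (alpha y)) (fun y => psi (alpha y)) x.
Proof.
move=> hD inj [C [gC [eqC Cx]]]; exists (fun y => C (alpha y)).
by split; [apply: graded_subcoalg_preimage | split=> // y /eqC].
Qed.

Lemma Igen_comp phi psi g : Igen D phi psi g ->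
  Igen D' (fun x => phi (alpha x)) (fun x => psi (alpha x)) (fun x => g (alpha x)).
Proof. by move=> [n gn]; exists n => x; rewrite gn /restr alpha_hproj. Qed.

Lemma Igen_lift phi psi g' : Igen D' (fun x => phi (alpha x)) (fun x => psi (alpha x)) g' ->
  exists g, Igen D phi psi g /\ forall x, g' x = g (alpha x).
Proof.
move=> [n gn]; exists (fun y => restr D phi n y - restr D psi n y).
by split=> [|x]; [exists n | rewrite gn /restr alpha_hproj].
Qed.

Lemma ideal_gen_comp (G : (H -> k) -> Prop) (G' : (H' -> k) -> Prop) h : is_gcHopf D ->
  (forall g, G g -> islinF g) -> (forall g, G g -> G' (fun x => g (alpha x))) ->
  ideal_gen D G h -> ideal_gen D' G' (fun x => h (alpha x)).
Proof.
move=> hD linG GG' [m [u [g [v [Guv eh]]]]].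
exists m, (fun i x => u i (alpha x)), (fun i x => g i (alpha x)), (fun i x => v i (alpha x)).
split=> [i|x]; first by have [gu [/GG' Gg gv]] := Guv i; split; [|split]; try apply: gdual_comp.
rewrite eh; apply: eq_bigr => i _; have [[lu _] [/linG lg [lv _]]] := Guv i.
rewrite conv_comp //; last exact: conv_lin.
congr (conv D' _ _ x).
by apply: functional_extensionality => y; rewrite conv_comp.
Qed.

(* A basis [e] of the degrees [< N] of [H'] stays free under [alpha], so the values
   of [u] on it can be prescribed by a form on [H] factoring through [htrunc D N]. *)
Lemma gdual_lift u : is_gcHopf D' -> is_gcHopf D -> injective alpha -> gdual D' u ->
  exists U, gdual D U /\ forall x, U (alpha x) = u x.
Proof.
move=> hD' hD inj [lu [N uN]].
have [w' [spanw' fixw']] := htrunc_span hD' N.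
have [e [fe ew' spane]] := lfree_extend w' (@lfree_nil k H').
have [w [spanw _]] := htrunc_span hD N.
have fixe j : (j < size (map alpha e))%N -> htrunc D N (map alpha e)`_j = (map alpha e)`_j.
  by rewrite size_map => hj; rewrite (nth_map 0) // -alpha_htrunc fixw' // ew' // mem_nth.
have [U [lU Ue UN]] :=
  linF_extend (fun j => u e`_j) (htrunc_lin hD N) spanw (lfree_comp inj fe) fixe.
exists U; split=> [|x].
  by split=> //; exists N => n x hn; apply: UN; rewrite htrunc_hproj // ltnNge hn.
have ker_x : htrunc D N (alpha x - alpha (htrunc D' N x)) = 0.
  by rewrite (islinMB (htrunc_lin hD N)) alpha_htrunc htrunc_idem ?subrr.
rewrite -[alpha x](subrK (alpha (htrunc D' N x))) (islinFD lU) UN // add0r.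
rewrite -(linF_htrunc hD' x lu uN).
have [c ->] := lspan_trans spane (spanw' x).
rewrite /lcomb (islinM_sum _ _ _ alpha_lin) (islinF_sum _ _ _ lU) (islinF_sum _ _ _ lu).
apply: eq_bigr => i _.
by rewrite (islinMZ alpha_lin) (islinFZ lU) (islinFZ lu) -(nth_map 0 0) ?Ue ?size_map.
Qed.

Lemma ideal_gen_lift (G : (H -> k) -> Prop) (G' : (H' -> k) -> Prop) f :
  is_gcHopf D' -> is_gcHopf D -> injective alpha -> (forall g, G g -> islinF g) ->
  (forall g', G' g' -> exists g, G g /\ forall x, g' x = g (alpha x)) ->
  ideal_gen D' G' f -> exists h, ideal_gen D G h /\ forall x, f x = h (alpha x).
Proof.
move=> hD' hD inj linG liftG [m [u [g [v [Guv ef]]]]].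
have [U hU] := choice _ (fun i => gdual_lift hD' hD inj (Guv i).1).
have [E hE] := choice _ (fun i => liftG _ (Guv i).2.1).
have [V hV] := choice _ (fun i => gdual_lift hD' hD inj (Guv i).2.2).
exists (fun y => \sum_(i < m) conv D (conv D (U i) (E i)) (V i) y); split.
  by exists m, U, E, V; split=> // i; split; [|split]; [case: (hU i) | case: (hE i) | case: (hV i)].
move=> x; rewrite ef; apply: eq_bigr => i _.
have [[lU _] Uu] := hU i; have [/linG lE gE] := hE i; have [[lV _] Vv] := hV i.
have -> : u i = fun y => U i (alpha y) by apply: functional_extensionality => y; rewrite Uu.
have -> : g i = fun y => E i (alpha y) by apply: functional_extensionality.
have -> : v i = fun y => V i (alpha y) by apply: functional_extensionality => y; rewrite Vv.
rewrite conv_comp //; last exact: conv_lin.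
by congr (conv D' _ _ x); apply: functional_extensionality => y; rewrite conv_comp.
Qed.

End HopfMorphism.

Unset Implicit Arguments.

Theorem proposition5p6 (k : fieldType) (H' H : algType k)
    (D' : HopfData H') (D : HopfData H) (alpha : H' -> H)
    (phi psi : H -> k) :
  is_gcHopf D' -> is_gcHopf D -> is_hopf_morph D' D alpha ->
  is_character phi -> is_character psi ->
  let phi' := fun x => phi (alpha x) in
  let psi' := fun x => psi (alpha x) in
  (* (a) *)
  (forall x, Sset D' phi' psi' x -> Sset D phi psi (alpha x)) /\
  (* (b) *)
  (forall f : H' -> k, Iset D' phi' psi' f <->
     ideal_gen D' (fun g => exists h, Iset D phi psi h /\
                                      forall x, g x = h (alpha x)) f) /\
  (* injective case *)
  (injective alpha ->
     (forall x, Sset D' phi' psi' x <-> Sset D phi psi (alpha x)) /\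
     (forall f : H' -> k, Iset D' phi' psi' f <->
        exists h, Iset D phi psi h /\ forall x, f x = h (alpha x))).
Proof.
move=> hD' hD ha [lphi _] [lpsi _]; cbv zeta.
have linI := Igen_lin hD lphi lpsi.
have linI' := Igen_lin hD' (islinF_comp lphi (alpha_lin ha)) (islinF_comp lpsi (alpha_lin ha)).
have pullback_Iset h : Iset D phi psi h ->
    Iset D' (fun x => phi (alpha x)) (fun x => psi (alpha x)) (fun x => h (alpha x)).
  by move=> Ih; exact (ideal_gen_comp ha hD linI (Igen_comp ha (phi := phi) (psi := psi)) Ih).
split; first by move=> x; apply: (Sset_comp ha (phi := phi) (psi := psi)).
split=> [f|inj].
  split; last first.
    apply: (ideal_gen_sub hD' linI') => g [h [Ih gh]].
    exact: ideal_gen_ext (pullback_Iset h Ih) (fun x => esym (gh x)).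
  apply: ideal_gen_mono => g /(Igen_lift ha) [h [Ih gh]].
  by exists h; split => //; exact (ideal_gen_base hD Ih (linI h Ih)).
split=> [x|f]; first by split; [apply: (Sset_comp ha (phi := phi) (psi := psi)) |
  apply: (Sset_comp_inj ha (phi := phi) (psi := psi) hD inj)].
split; first exact (ideal_gen_lift ha hD' hD inj linI (Igen_lift ha (phi := phi) (psi := psi))).
move=> [h [Ih fh]]; exact: ideal_gen_ext (pullback_Iset h Ih) (fun x => esym (fh x)).
Qed.
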